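(* Let $f(x,u)=f_0(x)+\sum_{i=1}^mf_i(x)u_i$ be a control affine system with input set $U=\{u\in\mathbb{R}^m:Au\ge b\}$. Let $I,S,T\subseteq\mathbb{R}^n$ be compact semi-algebraic sets with $I,T\subseteq S$, let $\mathcal{T}>0$ be a time horizon, and let $V(x,t)$ be a smooth function satisfying (C1) $V(x,0)<0$ for all $x\in I$; (C2) $V(x,\mathcal{T})>0$ for all $x\notin \mathrm{int}(T)$; (C3) $V(x,t)>0$ for all $t\in[0,\mathcal{T}]$ and all $x\notin\mathrm{int}(S)$; (C4) for all $t\in[0,\mathcal{T}]$ and all $x\in S$ there exists $u\in U$ with $\dot V(t,x,u)<0$, where $\dot V(t,x,u)=\frac{\partial V}{\partial t}(x,t)+\nabla_x V(x,t)\cdot f(x,u)$. Then there exists a control strategy such that every trajectory of the closed loop system with $x(0)\in I$ satisfies (1) $x(t)\in S$ for all $t\in[0,\mathcal{T}]$ and (2) $x(\mathcal{T})\in\mathrm{int}(T)$.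
   Context: $\mathrm{int}(R)$ denotes the interior of a set $R$. *)

From HB Require Import structures.
From mathcomp Require Import all_boot all_order all_algebra.
From mathcomp Require Import all_classical all_reals all_analysis.
Set Implicit Arguments. Unset Strict Implicit. Unset Printing Implicit Defensive.
Import Order.TTheory GRing.Theory Num.Theory.
Import numFieldNormedType.Exports.
Local Open Scope classical_set_scope.
Local Open Scope ring_scope.

Inductive pexpr (R : realType) (n : nat) : Type :=
| PConst of R
| PVar of 'I_n
| PAdd of pexpr R n & pexpr R n
| PMul of pexpr R n & pexpr R n.

Fixpoint peval (R : realType) (n : nat) (p : pexpr R n) (x : 'cV[R]_n) : R :=
  match p with
  | PConst c => c
  | PVar i => x i 0
  | PAdd p q => peval p x + peval q x
  | PMul p q => peval p x * peval q x
  end.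

Definition semialgebraic (R : realType) (n : nat) (S : set 'cV[R]_n) : Prop :=
  exists L : seq (seq (pexpr R n * bool)),
    S = [set x | has (fun l => all (fun pb =>
             if pb.2 then 0 < peval pb.1 x else peval pb.1 x == 0) l) L].

Fixpoint iterD (R : realType) (W : normedModType R) (vs : seq W) (g : W -> R)
  : W -> R :=
  match vs with
  | [::] => g
  | v :: vs' => fun z => 'D_v (iterD vs' g) z
  end.

Definition smooth (R : realType) (W : normedModType R) (g : W -> R) : Prop :=
  forall vs : seq W, forall z, differentiable (iterD vs g) z.

Definition caff (R : realType) (n m : nat) (f0 : 'cV[R]_n -> 'cV[R]_n)
  (fs : 'I_m -> 'cV[R]_n -> 'cV[R]_n) (x : 'cV[R]_n) (u : 'cV[R]_m) : 'cV[R]_n :=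
  f0 x + \sum_(i < m) u i 0 *: fs i x.

Definition inputset (R : realType) (p m : nat) (A : 'M[R]_(p, m)) (b : 'cV[R]_p)
  : set 'cV[R]_m := [set u | forall j : 'I_p, b j 0 <= (A *m u) j 0].

Definition dVdt (R : realType) (n : nat) (V : 'cV[R]_n * R -> R) (x : 'cV[R]_n)
  (t : R) : R := 'D_((0 : 'cV[R]_n), 1) V (x, t).

Definition dVdx (R : realType) (n : nat) (V : 'cV[R]_n * R -> R) (i : 'I_n)
  (x : 'cV[R]_n) (t : R) : R := 'D_((delta_mx i 0 : 'cV[R]_n), 0) V (x, t).

Definition Vdot (R : realType) (n m : nat) (V : 'cV[R]_n * R -> R)
  (f0 : 'cV[R]_n -> 'cV[R]_n) (fs : 'I_m -> 'cV[R]_n -> 'cV[R]_n)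
  (t : R) (x : 'cV[R]_n) (u : 'cV[R]_m) : R :=
  dVdt V x t + \sum_(i < n) dVdx V i x t * (caff f0 fs x u) i 0.

Definition cl_traj (R : realType) (n m : nat) (f0 : 'cV[R]_n -> 'cV[R]_n)
  (fs : 'I_m -> 'cV[R]_n -> 'cV[R]_n) (k : 'cV[R]_n -> R -> 'cV[R]_m)
  (Tf : R) (xt : R -> 'cV[R]_n) : Prop :=
  {within `[0, Tf], continuous xt} /\
  forall t, 0 < t < Tf -> is_derive t 1 xt (caff f0 fs (xt t) (k (xt t) t)).

From HB Require Import structures.
From mathcomp Require Import all_boot all_order all_algebra.
From mathcomp Require Import all_classical all_reals all_analysis.
From mathcomp Require Import lra.

(** By (C4) and the continuity of [Vdot] in (x, t), every point of the compact
    set S x [0, Tf] has a ball on which a single admissible input makes [Vdot]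
    negative. A partition of unity subordinate to finitely many of these balls
    glues the inputs into a continuous feedback, which is still admissible with
    [Vdot < 0] because U is convex and [Vdot] is affine in u.
    Along a closed-loop trajectory from I, W(t) = V(x(t), t) starts negative
    by (C1). While W < 0, (C3) keeps x(t) in int(S), so W' < 0; hence W stays
    negative on [0, Tf], for at a first time t0 with W(t0) >= 0 the mean value
    theorem would give c < t0 with W(c) < 0 and W'(c) > 0. Then (C3) puts x(t)
    in S and (C2) puts x(Tf) in int(T). *)

Set Implicit Arguments.
Unset Strict Implicit.
Unset Printing Implicit Defensive.
Import Order.TTheory GRing.Theory Num.Theory.
Import numFieldNormedType.Exports.
Local Open Scope classical_set_scope.
Local Open Scope ring_scope.

(** Only the points of positive weight have to lie in [C]: the weights built in
    [continuous_selection] vanish outside the ball where their input works. *)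
Definition convex_comb_closed (R : numDomainType) (E : lmodType R) (C : set E) :=
  forall (J : eqType) (r : seq J) (a : J -> R) (u : J -> E),
    (forall j, j \in r -> 0 <= a j) -> \sum_(j <- r) a j = 1 ->
    (forall j, j \in r -> 0 < a j -> C (u j)) ->
    C (\sum_(j <- r) a j *: u j).

Lemma convex_comb_closedI (R : numDomainType) (E : lmodType R) (C D : set E) :
  convex_comb_closed C -> convex_comb_closed D -> convex_comb_closed (C `&` D).
Proof.
move=> cC cD J r a u a0 a1 CDu.
by split; [apply: cC | apply: cD] => // j jr /(CDu j jr) [].
Qed.

Section convex_comb_real.
Variables (R : realDomainType) (J : eqType) (r : seq J) (a x : J -> R) (c : R).
Hypotheses (a_ge0 : forall j, j \in r -> 0 <= a j) (a_sum1 : \sum_(j <- r) a j = 1).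

Let convex_combBE : \sum_(j <- r) a j * x j - c = \sum_(j <- r) a j * (x j - c).
Proof.
rewrite -[c in LHS]mul1r -a_sum1 big_distrl -sumrB.
by under eq_bigr do rewrite -mulrBr.
Qed.

Lemma convex_comb_ge :
  (forall j, j \in r -> 0 < a j -> c <= x j) -> c <= \sum_(j <- r) a j * x j.
Proof.
move=> cx; rewrite -subr_ge0 convex_combBE big_seq sumr_ge0 // => j jr.
have [->|aj_neq0] := eqVneq (a j) 0; first by rewrite mul0r.
have aj_pos : 0 < a j by rewrite lt_neqAle eq_sym aj_neq0 a_ge0.
by rewrite mulr_ge0 ?subr_ge0 ?a_ge0 ?cx.
Qed.

Lemma convex_comb_lt :
  (forall j, j \in r -> 0 < a j -> x j < c) -> \sum_(j <- r) a j * x j < c.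
Proof.
move=> xc; rewrite -subr_lt0 convex_combBE -oppr_gt0 -sumrN big_seq.
have terms_ge0 j : j \in r -> 0 <= - (a j * (x j - c)).
  move=> jr; rewrite oppr_ge0; have [->|aj_neq0] := eqVneq (a j) 0.
    by rewrite mul0r.
  have aj_pos : 0 < a j by rewrite lt_neqAle eq_sym aj_neq0 a_ge0.
  by rewrite pmulr_rle0 // subr_le0 ltW ?xc.
have [j jr aj_pos] : exists2 j, j \in r & 0 < a j.
  have : \sum_(j <- r) a j != 0 by rewrite a_sum1 oner_neq0.
  by rewrite big_seq psumr_neq0 // => /hasP [j jr /andP[_ aj_pos]]; exists j.
rewrite lt_neqAle sumr_ge0 // andbT eq_sym psumr_neq0 //; apply/hasP; exists j => //.
by rewrite jr oppr_gt0 pmulr_rlt0 // subr_lt0 xc.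
Qed.

End convex_comb_real.

Lemma inputset_convex (R : realType) (p m : nat) (A : 'M[R]_(p, m)) (b : 'cV[R]_p) :
  convex_comb_closed (inputset A b).
Proof.
move=> J r a u a_ge0 a_sum1 Uu i.
rewrite mulmx_sumr summxE.
under eq_bigr do rewrite -scalemxAr mxE.
by apply: convex_comb_ge => // j jr /(Uu j jr); apply.
Qed.

Section Vdot_affine.
Variables (R : realType) (n m : nat) (V : 'cV[R]_n * R -> R).
Variables (f0 : 'cV[R]_n -> 'cV[R]_n) (fs : 'I_m -> 'cV[R]_n -> 'cV[R]_n).

Lemma VdotE t x u : Vdot V f0 fs t x u = Vdot V f0 fs t x 0 +
  \sum_(l < m) u l 0 * \sum_(i < n) dVdx V i x t * fs l x i 0.
Proof.
rewrite /Vdot /caff -addrA; congr (_ + _).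
under eq_bigr do rewrite mxE summxE.
under [X in _ = X + _]eq_bigr do rewrite mxE summxE.
under [X in _ = _ + X]eq_bigr do rewrite big_distrr.
rewrite exchange_big /= -big_split /=; apply: eq_bigr => i _.
rewrite mulrDr; congr (_ + _).
  by rewrite big1 ?addr0 // => l _; rewrite !mxE mul0r.
by rewrite big_distrr; apply: eq_bigr => l _; rewrite !mxE mulrCA.
Qed.

Lemma Vdot_convex_comb t x (J : Type) (r : seq J) (a : J -> R) (u : J -> 'cV[R]_m) :
  \sum_(j <- r) a j = 1 ->
  Vdot V f0 fs t x (\sum_(j <- r) a j *: u j) =
  \sum_(j <- r) a j * Vdot V f0 fs t x (u j).
Proof.
move=> a_sum1; under [RHS]eq_bigr do rewrite VdotE mulrDr.
rewrite big_split /= -big_distrl /= a_sum1 mul1r VdotE; congr (_ + _).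
under [RHS]eq_bigr do rewrite big_distrr /=.
rewrite [RHS]exchange_big /=; apply: eq_bigr => l _.
under [RHS]eq_bigr do rewrite mulrA.
rewrite -big_distrl /=; congr (_ * _).
by rewrite summxE; apply: eq_bigr => j _; rewrite mxE.
Qed.

Lemma Vdot_lt0_convex t x : convex_comb_closed [set u | Vdot V f0 fs t x u < 0].
Proof.
move=> J r a u a_ge0 a_sum1 neg_u /=; rewrite Vdot_convex_comb //.
exact: convex_comb_lt.
Qed.

End Vdot_affine.

Section continuous_selection.
Variables (R : realType) (X Y : normedModType R).

Definition bump (c : X) (r : R) (w : X) : R := Num.max 0 (1 - `|c - w| / r).

Lemma bump_ge0 c r w : 0 <= bump c r w.
Proof. by rewrite /bump le_max lexx. Qed.

Lemma bump_continuous c r : continuous (bump c r).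
Proof.
move=> w; apply: (@continuous_max _ _ (fun=> 0) (fun w => 1 - `|c - w| / r)).
  exact: cst_continuous.
apply: cvgB; first exact: cvg_cst.
apply: cvgM; last exact: cvg_cst.
by apply: cvg_norm; apply: cvgB; [exact: cvg_cst | exact: cvg_id].
Qed.

Lemma bump_gt0 c r w : 0 < r -> 0 < bump c r w -> ball c r w.
Proof.
move=> r_gt0; rewrite /bump lt_max ltxx /= subr_gt0 ltr_pdivrMr // mul1r.
by rewrite -ball_normE.
Qed.

Lemma bump_ge_half c r w : 0 < r -> ball c (r / 2) w -> 2^-1 <= bump c r w.
Proof.
move=> r_gt0; rewrite -ball_normE /= => cw.
have : `|c - w| / r <= 2^-1 by rewrite ler_pdivrMr // mulrC ltW.
rewrite /bump le_max; lra.
Qed.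

Lemma compact_ball_subcover (K : set X) (r : X -> R) :
  compact K -> (forall z, K z -> 0 < r z) ->
  exists D : seq X, [/\ uniq D, forall j, j \in D -> K j &
    forall z, K z -> exists2 j, j \in D & ball j (r j) z].
Proof.
rewrite compact_cover => cK r_gt0.
have [|D DK Dcov] := cK _ K (fun z => ball z (r z)) (fun z _ => ball_open _ _).
  by move=> z Kz; exists z => //; apply: ballxx; exact: r_gt0.
exists (finmap.enum_fset D); split=> [|j /DK|z /Dcov [j jD zj]].
- exact: finmap.fset_uniq.
- by rewrite inE.
- by exists j.
Qed.

Lemma continuous_selection (K : set X) (Q : X -> Y -> Prop) :
  compact K ->
  (forall z, K z -> exists u, \forall w \near z, Q w u) ->
  (forall w, convex_comb_closed (Q w)) ->
  exists k : X -> Y, continuous k /\ forall z, K z -> Q z (k z).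
Proof.
move=> cK Qloc Qconv.
have ball_witness z : exists ur : Y * R, K z ->
    0 < ur.2 /\ forall w, ball z ur.2 w -> Q w ur.1.
  have [Kz|nKz] := pselect (K z); last by exists (0, 1) => /nKz.
  have [u /nbhs_ballP [e e_gt0 Qu]] := Qloc z Kz.
  by exists (u, e).
have [g gP] := choice ball_witness.
have [|D [D_uniq DK Dcov]] := compact_ball_subcover (r := fun z => (g z).2 / 2) cK.
  by move=> z /gP [r_gt0 _]; rewrite divr_gt0.
pose phi j := bump j (g j).2.
pose s w := \sum_(j <- D) phi j w.
have s_cont : continuous s.
  by apply: continuous_big => [|j _]; [exact: add_continuous | exact: bump_continuous].
(* The floor 1/2 keeps the normalisation continuous off K; on K the bumps
   already sum to at least 1/2. *)
pose den w := Num.max 2^-1 (s w).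
pose F w := \sum_(j <- D) phi j w *: (g j).1.
exists (fun w => (den w)^-1 *: F w); split=> [w|z Kz].
  apply: (@continuousZ _ _ _ (fun w => (den w)^-1) F).
    apply: continuousV; first by rewrite gt_eqF // lt_max invr_gt0 ltr0n.
    apply: (@continuous_max _ _ (fun=> 2^-1) s); [exact: cst_continuous | exact: s_cont].
  apply: continuous_big => [|j _]; first exact: add_continuous.
  by move=> v; apply: continuousZ; [exact: bump_continuous | exact: cst_continuous].
have [j jD zj] := Dcov z Kz.
have s_ge : 2^-1 <= s z.
  apply: le_trans (bump_ge_half (gP j (DK j jD)).1 zj) _.
  by rewrite /s (bigD1_seq j) //= lerDl sumr_ge0 // => i _; exact: bump_ge0.
have s_gt0 : 0 < s z by apply: lt_le_trans s_ge; rewrite invr_gt0 ltr0n.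
rewrite /den (max_idPr s_ge) scaler_sumr.
under eq_bigr do rewrite scalerA.
apply: Qconv => [i _||i iD].
- by rewrite mulr_ge0 ?invr_ge0 ?bump_ge0 ?ltW.
- by rewrite -big_distrr /= mulVf ?gt_eqF.
have [ri_gt0 Qi] := gP i (DK i iD).
by rewrite pmulr_rgt0 ?invr_gt0 // => /(bump_gt0 ri_gt0) /Qi.
Qed.

End continuous_selection.

Section V_along_curves.
Variables (R : realType) (n : nat) (V : 'cV[R]_n * R -> R).

Lemma diff_state_time x t (dx : 'cV[R]_n) : differentiable V (x, t) ->
  'd V (x, t) (dx, 1) = dVdt V x t + \sum_(i < n) dVdx V i x t * dx i 0.
Proof.
move=> dV; rewrite /dVdt /dVdx.
have -> : (dx, 1) = (0, 1) + (dx, 0) :> 'cV[R]_n * R.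
  by rewrite -[RHS]/(0 + dx, 1 + 0) add0r addr0.
have dxE : (dx, 0) = \sum_(i < n) dx i 0 *: (delta_mx i 0, 0) :> 'cV[R]_n * R.
  have sum_pair (F : 'I_n -> 'cV[R]_n * R) :
      \sum_i F i = (\sum_i (F i).1, \sum_i (F i).2).
    by elim/big_rec3: _ => // i y1 y2 y3 _ ->; case: (F i).
  rewrite sum_pair /=; congr (_, _); last by rewrite big1 // => i _; rewrite scaler0.
  by rewrite {1}(matrix_sum_delta dx); apply: eq_bigr => i _; rewrite big_ord1.
rewrite linearD dxE linear_sum deriveE //; congr (_ + _).
by apply: eq_bigr => i _; rewrite linearZ deriveE // mulrC.
Qed.

Lemma is_derive_along_curve (xt : R -> 'cV[R]_n) c (dx : 'cV[R]_n) :
  differentiable V (xt c, c) -> is_derive c 1 xt dx ->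
  is_derive c 1 (fun s => V (xt s, s))
    (dVdt V (xt c) c + \sum_(i < n) dVdx V i (xt c) c * dx i 0).
Proof.
move=> dV dxt.
have dxt_c : differentiable xt c by apply/derivable1_diffP; exact: ex_derive.
have dcurve : differentiable (fun s => (xt s, s)) c.
  have did : differentiable (@id R) c by exact: ex_diff.
  exact: (differentiable_pair dxt_c did).
have dW : differentiable (V \o (fun s => (xt s, s))) c by exact: differentiable_comp.
rewrite -diff_state_time //.
have := derivableP (@diff_derivable _ _ _ _ _ (1:R) dW).
rewrite deriveE // diff_comp // diff_pair //=.
rewrite -(@deriveE _ _ _ _ _ (1:R) dxt_c) derive_val.
by rewrite (@diff_val _ _ _ _ _ _ _ (is_diff_id c)).
Qed.

Lemma continuous_along_curve (xt : R -> 'cV[R]_n) (A : set R) :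
  continuous V -> {within A, continuous xt} ->
  {within A, continuous (fun s => V (xt s, s))}.
Proof.
move=> cV cxt; apply/subspace_continuousP => s As.
have cxt_s := (@subspace_continuousP _ A _ xt).1 cxt s As.
apply: (cvg_comp _ _ (cvg_pair cxt_s (cvg_within A))).
exact: cV.
Qed.

End V_along_curves.

Section Vdot_continuity.
Variables (R : realType) (n m : nat) (V : 'cV[R]_n * R -> R).
Variables (f0 : 'cV[R]_n -> 'cV[R]_n) (fs : 'I_m -> 'cV[R]_n -> 'cV[R]_n).
Hypotheses (f0_cont : continuous f0) (fs_cont : forall i, continuous (fs i)).

Lemma caff_continuous u : continuous (fun x => caff f0 fs x u).
Proof.
move=> x; apply: continuousD; first exact: f0_cont.
apply: (@continuous_big _ _ _ _ _ add_continuous _ _ (fun l x => u l 0 *: fs l x)) => l _ y.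
by apply: continuousZ; [exact: cst_continuous | exact: fs_cont].
Qed.

Lemma Vdot_continuous u : smooth V ->
  continuous (fun z : 'cV[R]_n * R => Vdot V f0 fs z.2 z.1 u).
Proof.
move=> sV.
have dV_cont (v : 'cV[R]_n * R) :
    continuous (fun z : 'cV[R]_n * R => 'D_v V (z.1, z.2)).
  have -> : (fun z : 'cV[R]_n * R => 'D_v V (z.1, z.2)) = 'D_v V by apply/funext => -[].
  by move=> z; apply: differentiable_continuous; exact: (sV [:: v]).
have caff_coord (i : 'I_n) :
    continuous (fun z : 'cV[R]_n * R => caff f0 fs z.1 u i 0).
  move=> z; apply: (@continuous_comp _ _ _ (fun z => caff f0 fs z.1 u) (fun M => M i 0)).
    apply: (@continuous_comp _ _ _ fst (fun x => caff f0 fs x u)); first exact: cvg_fst.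
    exact: caff_continuous.
  exact: coord_continuous.
move=> z; apply: cvgD; first exact: dV_cont.
apply: (@continuous_big _ _ _ _ _ add_continuous _ _
  (fun i z => dVdx V i z.1 z.2 * caff f0 fs z.1 u i 0)) => i _ y.
by apply: cvgM; [exact: dV_cont | exact: caff_coord].
Qed.

End Vdot_continuity.

Section first_crossing.
Variables (R : realType) (W : R -> R).

Lemma first_nonneg_time t1 : 0 <= t1 -> {within `[0, t1], continuous W} ->
  W 0 < 0 -> 0 <= W t1 ->
  exists t0, [/\ 0 < t0 <= t1, 0 <= W t0 & forall s, 0 <= s < t0 -> W s < 0].
Proof.
move=> t1_ge0 W_cont W0 W_t1.
pose P := [set t | 0 <= t <= t1 /\ 0 <= W t].
have P_t1 : P t1 by split; rewrite ?t1_ge0 ?lexx.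
have P_lb : lbound P 0 by move=> t [/andP[]].
have P_inf : has_inf P by split; [exists t1 | exists 0].
pose t0 := inf P.
have t0_ge0 : 0 <= t0 by apply: lb_le_inf; first exists t1.
have t0_le : t0 <= t1 by apply: ge_inf; first exists 0.
have W_before s : 0 <= s < t0 -> W s < 0.
  move=> /andP[s_ge0 s_lt]; rewrite ltNge; apply/negP => W_s.
  have : t0 <= s by apply: ge_inf; [exists 0 | rewrite /P /= s_ge0 (le_trans (ltW s_lt))].
  by rewrite leNgt s_lt.
have t0_in : `[0, t1]%classic t0 by rewrite /= in_itv /= t0_ge0.
have W_t0 : 0 <= W t0.
  rewrite leNgt; apply/negP => W_t0.
  have := (@subspace_continuousP _ `[0, t1] _ W).1 W_cont t0 t0_in.
  move=> /cvgr_lt /(_ 0 W_t0) /nbhs_ballP [e e_gt0 We].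
  have [q [/andP[q_ge0 q_le] W_q] q_lt] := inf_adherent e_gt0 P_inf.
  have t0_q : t0 <= q by apply: ge_inf; [exists 0 | split; rewrite ?q_ge0].
  have : ball t0 e q by rewrite -ball_normE /= ler0_norm ?subr_le0 // opprB ltrBlDl.
  move=> /We /=; rewrite in_itv /= q_ge0 q_le => /(_ isT).
  by rewrite ltNge W_q.
exists t0; split=> //; rewrite t0_le andbT lt_neqAle t0_ge0 andbT.
by apply: contraTneq W_t0 => <-; rewrite -ltNge.
Qed.

Lemma lt0_preserved (W' : R -> R) T :
  {within `[0, T], continuous W} ->
  (forall t, 0 < t < T -> is_derive t 1 W (W' t)) ->
  (forall t, 0 < t < T -> W t < 0 -> W' t < 0) ->
  W 0 < 0 -> forall t, 0 <= t <= T -> W t < 0.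
Proof.
move=> W_cont W_der W'_neg W0 t1 /andP[t1_ge0 t1_T]; rewrite ltNge; apply/negP => W_t1.
have W_cont_sub a : a <= T -> {within `[0, a], continuous W}.
  move=> a_T; apply: continuous_subspaceW W_cont => s /=.
  by rewrite !in_itv /= => /andP[-> /le_trans->].
have [t0 [/andP[t0_gt0 t0_t1] W_t0 W_before]] :=
  first_nonneg_time t1_ge0 (W_cont_sub _ t1_T) W0 W_t1.
have t0_T := le_trans t0_t1 t1_T.
have W_der_t0 s : s \in `]0, t0[ -> is_derive s 1 W (W' s).
  by rewrite in_itv /= => /andP[s_gt0 s_t0]; apply: W_der; rewrite s_gt0 (lt_le_trans s_t0).
have [c] := MVT t0_gt0 W_der_t0 (W_cont_sub _ t0_T).
rewrite in_itv /= => /andP[c_gt0 c_t0] W_incr.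
have : W' c < 0.
  apply: W'_neg; first by rewrite c_gt0 (lt_le_trans c_t0).
  by apply: W_before; rewrite c_t0 ltW.
have : 0 < W t0 - W 0 by rewrite subr_gt0 (lt_le_trans W0).
by rewrite W_incr subr0 pmulr_lgt0 // => /lt_trans/[apply]; rewrite ltxx.
Qed.

End first_crossing.

Section control.
Variables (R : realType) (n m p : nat).
Variables (f0 : 'cV[R]_n -> 'cV[R]_n) (fs : 'I_m -> 'cV[R]_n -> 'cV[R]_n).
Variables (I S T : set 'cV[R]_n) (Tf : R) (V : 'cV[R]_n * R -> R).

Lemma closed_loop_reach_avoid (k : 'cV[R]_n -> R -> 'cV[R]_m) (xt : R -> 'cV[R]_n) :
  (forall z, differentiable V z) -> 0 <= Tf ->
  (forall x, I x -> V (x, 0) < 0) ->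
  (forall x, ~ (interior T) x -> 0 < V (x, Tf)) ->
  (forall t x, 0 <= t <= Tf -> ~ (interior S) x -> 0 < V (x, t)) ->
  (forall x t, S x -> 0 <= t <= Tf -> Vdot V f0 fs t x (k x t) < 0) ->
  I (xt 0) -> cl_traj f0 fs k Tf xt ->
  (forall t, 0 <= t <= Tf -> S (xt t)) /\ (interior T) (xt Tf).
Proof.
move=> dV Tf_ge0 V_I V_notT V_notS k_neg I_xt0 [xt_cont xt_der].
pose W s := V (xt s, s).
have in_intS t : 0 <= t <= Tf -> W t < 0 -> (interior S) (xt t).
  move=> tI Wt; apply: contrapT => /(V_notS t _ tI) /(lt_trans Wt).
  by rewrite ltxx.
have W_neg : forall t, 0 <= t <= Tf -> W t < 0.
  apply: (@lt0_preserved _ W (fun t => Vdot V f0 fs t (xt t) (k (xt t) t))).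
  - apply: continuous_along_curve xt_cont.
    by move=> z; apply: differentiable_continuous.
  - by move=> t t_in; apply: is_derive_along_curve; [exact: dV | exact: xt_der].
  - move=> t /andP[t_gt0 t_lt] Wt; have tI : 0 <= t <= Tf by rewrite !ltW.
    by apply: k_neg => //; apply: interior_subset; exact: in_intS.
  - exact: V_I.
split=> [t tI|]; first by apply: interior_subset; apply: in_intS (W_neg t tI).
have TfI : 0 <= Tf <= Tf by rewrite Tf_ge0 lexx.
apply: contrapT => /V_notT /(lt_trans (W_neg Tf TfI)).
by rewrite ltxx.
Qed.

Variables (A : 'M[R]_(p, m)) (b : 'cV[R]_p).

Lemma Vdot_decreasing_feedback :
  continuous f0 -> (forall i, continuous (fs i)) -> compact S -> smooth V ->
  (forall t x, 0 <= t <= Tf -> S x ->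
     exists2 u, inputset A b u & Vdot V f0 fs t x u < 0) ->
  exists k : 'cV[R]_n * R -> 'cV[R]_m, continuous k /\
    forall x t, S x -> 0 <= t <= Tf ->
      inputset A b (k (x, t)) /\ Vdot V f0 fs t x (k (x, t)) < 0.
Proof.
move=> f0_cont fs_cont cS sV V_dec.
have [|[x t] [/= Sx]||k [k_cont kP]] := continuous_selection
  (K := S `*` `[0, Tf]%classic)
  (Q := fun z u => inputset A b u /\ Vdot V f0 fs z.2 z.1 u < 0).
- by apply: compact_setX => //; exact: segment_compact.
- rewrite in_itv /= => tI; have [u Uu u_dec] := V_dec t x tI Sx; exists u.
  move: (Vdot_continuous f0_cont fs_cont (u := u) sV (x := (x, t))).
  by move=> /cvgr_lt /(_ 0 u_dec); apply: filterS => w w_dec; split.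
- by move=> w; apply: convex_comb_closedI; [exact: inputset_convex | exact: Vdot_lt0_convex].
by exists k; split=> // x t Sx tI; apply: (kP (x, t)); split; rewrite //= in_itv.
Qed.

End control.

Theorem theorem10 (R : realType) (n m p : nat)
  (f0 : 'cV[R]_n -> 'cV[R]_n) (fs : 'I_m -> 'cV[R]_n -> 'cV[R]_n)
  (A : 'M[R]_(p, m)) (b : 'cV[R]_p)
  (I S T : set 'cV[R]_n) (Tf : R) (V : 'cV[R]_n * R -> R) :
  continuous f0 -> (forall i, continuous (fs i)) ->
  compact I -> compact S -> compact T ->
  semialgebraic I -> semialgebraic S -> semialgebraic T ->
  I `<=` S -> T `<=` S ->
  0 < Tf ->
  smooth V ->
  (forall x, I x -> V (x, 0) < 0) ->
  (forall x, ~ (interior T) x -> 0 < V (x, Tf)) ->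
  (forall t x, 0 <= t <= Tf -> ~ (interior S) x -> 0 < V (x, t)) ->
  (forall t x, 0 <= t <= Tf -> S x ->
     exists2 u, inputset A b u & Vdot V f0 fs t x u < 0) ->
  exists k : 'cV[R]_n -> R -> 'cV[R]_m,
    (forall x t, S x -> 0 <= t <= Tf -> inputset A b (k x t)) /\
    continuous (fun z : 'cV[R]_n * R => k z.1 z.2) /\
    (forall xt : R -> 'cV[R]_n, I (xt 0) -> cl_traj f0 fs k Tf xt ->
       (forall t, 0 <= t <= Tf -> S (xt t)) /\ (interior T) (xt Tf)).
Proof.
move=> f0_cont fs_cont _ cS _ _ _ _ _ _ Tf_gt0 sV V_I V_notT V_notS V_dec.
have [k [k_cont kP]] := Vdot_decreasing_feedback f0_cont fs_cont cS sV V_dec.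
exists (fun x t => k (x, t)); split; [|split].
- by move=> x t Sx tI; case: (kP x t Sx tI).
- by have -> : (fun z : 'cV[R]_n * R => k (z.1, z.2)) = k by apply/funext => -[].
move=> xt I_xt0 traj.
apply: (closed_loop_reach_avoid _ (ltW Tf_gt0) V_I V_notT V_notS _ I_xt0 traj).
- by move=> z; exact: (sV [::]).
- by move=> x t Sx tI; case: (kP x t Sx tI).
Qed.
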